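(* Let $\mathcal{X} \subseteq \mathbb{R}^m$ be countable with ground metric $d$, and let $\widehat\nu = \sum_{j=1}^N \widehat\nu_j \delta_{\widehat x_j}$ be a probability mass function supported on $N$ distinct points $\widehat x_1,\dots,\widehat x_N \in \mathcal{X}$ with $\widehat\nu_j > 0$ and $\sum_j \widehat\nu_j = 1$. For $\varepsilon \ge 0$ let $\mathbb{B}_{\mathbb{W}}(\widehat\nu,\varepsilon) = \{\nu \in \mathcal{M}(\mathcal{X}) : \mathbb{W}(\nu,\widehat\nu) \le \varepsilon\}$. Then for any $\varepsilon \ge 0$ and $x \in \mathcal{X}$ there exists $\nu^\star_{\mathbb{W}} \in \mathbb{B}_{\mathbb{W}}(\widehat\nu,\varepsilon)$ with $$\sup_{\nu \in \mathbb{B}_{\mathbb{W}}(\widehat\nu,\varepsilon)} \nu(x) = \nu^\star_{\mathbb{W}}(x).$$ Furthermore, $\nu^\star_{\mathbb{W}}$ is supported on at most $N+1$ points and satisfies $\mathrm{supp}(\nu^\star_{\mathbb{W}}) \subseteq \mathrm{supp}(\widehat\nu) \cup \{x\}$.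
   Context: $\mathcal{M}(\mathcal{X})$ is the set of probability mass functions supported on $\mathcal{X}$. The type-1 Wasserstein distance between $\nu_1,\nu_2 \in \mathcal{M}(\mathcal{X})$ is $\mathbb{W}(\nu_1,\nu_2) = \inf_{\lambda \in \Lambda(\nu_1,\nu_2)} \mathbb{E}_\lambda[d(x_1,x_2)]$, where $\Lambda(\nu_1,\nu_2)$ is the set of distributions on $\mathcal{X}\times\mathcal{X}$ with marginals $\nu_1$ and $\nu_2$, and $d$ is the ground metric on $\mathcal{X}$. *)

From HB Require Import structures.
From mathcomp Require Import all_boot all_order all_algebra.
From mathcomp Require Import all_classical all_reals all_analysis.
Set Implicit Arguments. Unset Strict Implicit. Unset Printing Implicit Defensive.
Import Order.TTheory GRing.Theory Num.Theory.
Local Open Scope classical_set_scope.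
Local Open Scope ring_scope.

Section Wasserstein.
Variables (R : realType) (m : nat).
Local Notation pt := 'rV[R]_m.

Definition metric_on (X : set pt) (d : pt -> pt -> R) : Prop :=
  (forall x y, X x -> X y -> 0 <= d x y) /\
  (forall x y, X x -> X y -> (d x y = 0 <-> x = y)) /\
  (forall x y, X x -> X y -> d x y = d y x) /\
  (forall x y z, X x -> X y -> X z -> d x z <= d x y + d y z).

Definition pmf_on (X : set pt) (nu : pt -> R) : Prop :=
  (forall y, 0 <= nu y) /\ (forall y, ~ X y -> nu y = 0) /\
  (\esum_(y in X) (nu y)%:E = 1%E).

Definition coupling (X : set pt) (nu1 nu2 : pt -> R) (lam : pt * pt -> R) : Prop :=
  (forall p, 0 <= lam p) /\ (forall p, ~ (X `*` X) p -> lam p = 0) /\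
  (forall x1, X x1 -> \esum_(x2 in X) (lam (x1, x2))%:E = (nu1 x1)%:E) /\
  (forall x2, X x2 -> \esum_(x1 in X) (lam (x1, x2))%:E = (nu2 x2)%:E).

Definition expect_cost (X : set pt) (d : pt -> pt -> R) (lam : pt * pt -> R) : \bar R :=
  \esum_(p in X `*` X) (lam p * d p.1 p.2)%:E.

Definition wass (X : set pt) (d : pt -> pt -> R) (nu1 nu2 : pt -> R) : \bar R :=
  ereal_inf [set expect_cost X d lam | lam in coupling X nu1 nu2].

Definition wball (X : set pt) (d : pt -> pt -> R) (nuh : pt -> R) (eps : R)
  : set (pt -> R) :=
  [set nu | pmf_on X nu /\ (wass X d nu nuh <= eps%:E)%E].

Definition discrete_pmf (N : nat) (w : 'I_N -> R) (xh : 'I_N -> pt) : pt -> R :=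
  fun y => \sum_(j < N) w j * (xh j == y)%:R.

Definition supp (nu : pt -> R) : set pt := [set y | nu y != 0].

End Wasserstein.

From HB Require Import structures.
From mathcomp Require Import all_boot all_order all_algebra.
From mathcomp Require Import all_classical all_reals all_analysis.
From mathcomp Require Import lra ring.
Set Implicit Arguments. Unset Strict Implicit. Unset Printing Implicit Defensive.
Import Order.TTheory GRing.Theory Num.Theory.
Local Open Scope classical_set_scope.
Local Open Scope ring_scope.

(* Raising the mass at [x] within the ball means transporting mass from the
   atoms [xh j] to [x], at cost [d x (xh j)] per unit.  The best one can do is
   therefore the value of the fractional knapsack problem
     maximise [\sum_j t j]  subject to  [0 <= t j <= w j],
                                         [\sum_j t j * d x (xh j) <= eps],
   which the greedy solution attains (the atoms closest to [x] are moved
   first), and moving [t j] from [xh j] to [x] realises it by a measure of the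
   ball supported on the atoms and [x].  As the Wasserstein infimum need not
   be attained, a measure of the ball only yields a plan of cost [eps + eta];
   the Lagrange multiplier of the budget bounds the resulting excess mass by
   a multiple of [eta]. *)

Section FractionalKnapsack.
Variables (R : realType) (N : nat) (w c : 'I_N -> R).
Hypotheses (w_ge0 : forall j, 0 <= w j) (c_ge0 : forall j, 0 <= c j).

Definition knapsack_feasible (e : R) (s : 'I_N -> R) : Prop :=
  (forall j, 0 <= s j <= w j) /\ \sum_(j < N) s j * c j <= e.

Definition cheap_cost (r : R) := \sum_(j < N | c j < r) w j * c j.
Definition level_cost (r : R) := \sum_(j < N | c j == r) w j * c j.

Definition greedy (r al : R) (j : 'I_N) : R :=
  if c j < r then w j else if c j == r then al * w j else 0.

Lemma level_cost_ge0 r : 0 <= level_cost r.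
Proof. by apply: sumr_ge0 => j _; rewrite mulr_ge0. Qed.

Lemma cheap_level_costE r :
  cheap_cost r + level_cost r = \sum_(j < N | c j <= r) w j * c j.
Proof.
rewrite /cheap_cost /level_cost (big_mkcond (fun j => c j < r)).
rewrite (big_mkcond (fun j => c j == r)) (big_mkcond (fun j => c j <= r)) -big_split.
by apply: eq_bigr => j _ /=; case: ltgtP; rewrite ?addr0 ?add0r.
Qed.

Lemma exists_pos_cost (P : pred 'I_N) :
  0 < \sum_(j < N | P j) w j * c j -> exists2 j, P j & 0 < c j.
Proof.
move=> /lt0r_neq0; rewrite psumr_neq0 => [/hasP[j _ /andP[Pj wc_gt0]]|j _].
  exists j => //; rewrite lt0r c_ge0 andbT.
  by apply: contraTneq wc_gt0 => ->; rewrite mulr0 ltxx.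
by rewrite mulr_ge0.
Qed.

Lemma exists_threshold (eps : R) : 0 <= eps < \sum_(j < N) w j * c j ->
  exists2 r, 0 < r & cheap_cost r <= eps <= cheap_cost r + level_cost r.
Proof.
(* [r] is the largest cost level such that all strictly cheaper items fit into the budget. *)
move=> /andP[eps_ge0 eps_lt].
have [k0 _ ck0] : exists2 k, true & 0 < c k by apply: exists_pos_cost; lra.
have [k1 ck1 k1_min] := @arg_minP _ _ _ k0 (fun k => 0 < c k) c ck0.
pose Q k := cheap_cost (c k) <= eps.
have Qk1 : Q k1.
  rewrite /Q /cheap_cost big1 // => j cj_lt.
  have [cj_gt0 | cj_le0] := ltP 0 (c j).
    by have := lt_le_trans cj_lt (k1_min j cj_gt0); rewrite ltxx.
  have -> : c j = 0 by apply/le_anti; rewrite cj_le0 c_ge0.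
  by rewrite mulr0.
have [k Qk k_max] := @arg_maxP _ _ _ k1 Q c Qk1.
exists (c k); first exact: lt_le_trans ck1 (k_max k1 Qk1).
apply/andP; split=> //.
rewrite cheap_level_costE; case: leP => // below.
move: eps_lt; rewrite (bigID (fun j => c j <= c k)) /= => eps_lt.
have [j0 cj0 _] : exists2 j, ~~ (c j <= c k) & 0 < c j.
  by apply: exists_pos_cost; lra.
rewrite -ltNge in cj0.
have [l cl l_min] := @arg_minP _ _ _ j0 (fun j => c k < c j) c cj0.
suff Ql : Q l by have := lt_le_trans cl (k_max l Ql); rewrite ltxx.
rewrite /Q /cheap_cost (eq_bigl (fun j => c j <= c k)); first exact: ltW.
move=> j; case: (leP (c j) (c k)) => [cjk | /l_min clj].
  exact: le_lt_trans cjk cl.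
by apply/negbTE; rewrite -leNgt.
Qed.

Lemma greedy_bounds r al : 0 <= al <= 1 -> forall j, 0 <= greedy r al j <= w j.
Proof.
move=> /andP[al_ge0 al_le1] j; rewrite /greedy.
case: ifP => _; first by rewrite w_ge0 lexx.
case: ifP => _; last by rewrite lexx w_ge0.
by rewrite mulr_ge0 // ler_piMl.
Qed.

Lemma greedy_cost r al :
  \sum_(j < N) greedy r al j * c j = cheap_cost r + al * level_cost r.
Proof.
rewrite /cheap_cost /level_cost mulr_sumr (big_mkcond (fun j => c j < r)).
rewrite (big_mkcond (fun j => c j == r)) -big_split; apply: eq_bigr => j _ /=.
by rewrite /greedy; case: ltgtP; rewrite ?mul0r ?addr0 ?add0r ?mulrA.
Qed.

Lemma greedy_exchange r al (s : 'I_N -> R) : 0 < r -> (forall j, 0 <= s j <= w j) ->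
  \sum_(j < N) s j - \sum_(j < N) greedy r al j <=
  r^-1 * (\sum_(j < N) s j * c j - \sum_(j < N) greedy r al j * c j).
Proof.
(* termwise, [(s j - greedy r al j) * (1 - c j / r) <= 0]: [r^-1] is the
   Lagrange multiplier of the budget constraint *)
move=> r_gt0 s_bounds; rewrite -!sumrB mulr_sumr; apply: ler_sum => j _.
have /andP[s_ge0 s_le] := s_bounds j.
rewrite -mulrBl mulrCA -[leLHS]mulr1 -subr_ge0 -mulrBr.
rewrite /greedy; case: ltgtP => [cj_lt | cj_gt | ->].
- rewrite mulr_le0 ?subr_le0 // ler_pdivrMl // mulr1; exact: ltW.
- rewrite subr0 mulr_ge0 // subr_ge0 ler_pdivlMl // mulr1; exact: ltW.
- by rewrite mulVf ?gt_eqF // subrr mulr0.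
Qed.

Lemma fractional_knapsack (eps : R) : 0 <= eps ->
  exists2 t, knapsack_feasible eps t & exists2 lam, 0 <= lam &
    forall eta s, knapsack_feasible (eps + eta) s ->
      \sum_(j < N) s j <= \sum_(j < N) t j + lam * eta.
Proof.
move=> eps_ge0; case: (leP (\sum_(j < N) w j * c j) eps) => [w_cost | w_cost].
  exists w; first by split=> // j; rewrite w_ge0 lexx.
  exists 0 => // eta s [s_bounds _]; rewrite mul0r addr0.
  by apply: ler_sum => j _; case/andP: (s_bounds j).
have /exists_threshold[r r_gt0 /andP[cheap_le le_level]] : 0 <= eps < \sum_(j < N) w j * c j.
  by rewrite eps_ge0.
(* if [level_cost r = 0] then [eps = cheap_cost r] and [al = 0] (as [x / 0 = 0]) *)
pose al := (eps - cheap_cost r) / level_cost r.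
have al_level : al * level_cost r = eps - cheap_cost r.
  have [level0 | level_neq0] := eqVneq (level_cost r) 0; last by rewrite divfK.
  by rewrite level0 mulr0; rewrite level0 addr0 in le_level; lra.
have al_bounds : 0 <= al <= 1.
  have [level0 | level_neq0] := eqVneq (level_cost r) 0.
    by rewrite /al level0 invr0 mulr0 lexx ler01.
  have level_gt0 : 0 < level_cost r by rewrite lt0r level_neq0 level_cost_ge0.
  rewrite divr_ge0 ?subr_ge0 ?level_cost_ge0 //= ler_pdivrMr // mul1r; lra.
have t_cost : \sum_(j < N) greedy r al j * c j = eps by rewrite greedy_cost al_level; lra.
exists (greedy r al); first by split; [exact: greedy_bounds | rewrite t_cost].
exists r^-1; first by rewrite invr_ge0 ltW.
move=> eta s [s_bounds s_cost].
have := greedy_exchange al r_gt0 s_bounds; rewrite t_cost.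
have : r^-1 * (\sum_(j < N) s j * c j - eps) <= r^-1 * eta.
  by apply: ler_wpM2l; [rewrite invr_ge0 ltW | rewrite lerBlDl].
lra.
Qed.

End FractionalKnapsack.

Lemma sup_max (R : realType) (S : set R) (a : R) : S a -> ubound S a -> sup S = a.
Proof.
move=> Sa a_ub; apply/le_anti/andP; split; first exact: ge_sup (ex_intro _ a Sa) a_ub.
exact: ub_le_sup (ex_intro _ a a_ub) _ Sa.
Qed.

Section PointMasses.
Context {R : realType} {T : choiceType}.

Lemma sum_delta_inj n (a : 'I_n -> T) (g : 'I_n -> R) k : injective a ->
  \sum_(j < n) g j * (a j == a k)%:R = g k.
Proof.
move=> a_inj; rewrite (bigD1 k) //= eqxx mulr1 big1 ?addr0 // => j jk.
by rewrite (inj_eq a_inj) (negbTE jk) mulr0.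
Qed.

Lemma sum_delta_out n (a : 'I_n -> T) (g : 'I_n -> R) y : (forall j, a j <> y) ->
  \sum_(j < n) g j * (a j == y)%:R = 0.
Proof. by move=> y_out; apply: big1 => j _; case: eqP => [/y_out|_]; rewrite ?mulr0. Qed.

Lemma esum_point_mass (A : set T) (a : T) (g : R) : A a -> 0 <= g ->
  \esum_(y in A) (g * (a == y)%:R)%:E = g%:E.
Proof.
move=> Aa g_ge0.
rewrite (esumID [set a]); last by move=> y _; rewrite lee_fin mulr_ge0.
have -> : A `&` [set a] = [set a] by apply/seteqP; split=> y /=; [case | move=> ->].
rewrite esum_set1 ?lee_fin ?eqxx ?mulr1 // esum1 ?adde0 // => y [_ /eqP ya].
by rewrite eq_sym (negbTE ya) mulr0.
Qed.

Lemma esum_point_masses (A : set T) n (a : 'I_n -> T) (g : 'I_n -> R) :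
  (forall j, A (a j)) -> (forall j, 0 <= g j) ->
  \esum_(y in A) (\sum_(j < n) g j * (a j == y)%:R)%:E = (\sum_(j < n) g j)%:E.
Proof.
move=> Aa g_ge0; under eq_esum do rewrite -sumEFin.
rewrite esum_sum; last by move=> y j _ _; rewrite lee_fin mulr_ge0.
by rewrite -sumEFin; apply: eq_bigr => j _; exact: esum_point_mass.
Qed.

Lemma le_term_esum (A : set T) (f : T -> R) (a : T) :
  (forall y, A y -> 0 <= f y) -> A a -> ((f a)%:E <= \esum_(y in A) (f y)%:E)%E.
Proof.
move=> f_ge0 Aa; rewrite -(esum_point_mass Aa (f_ge0 a Aa)).
apply: le_esum => y Ay; rewrite lee_fin.
by case: eqP => [<-|_]; rewrite ?mulr1 ?mulr0 ?f_ge0.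
Qed.

End PointMasses.

Section WorstCaseMass.
Variables (R : realType) (m : nat) (X : set 'rV[R]_m) (d : 'rV[R]_m -> 'rV[R]_m -> R).
Variables (N : nat) (w : 'I_N -> R) (xh : 'I_N -> 'rV[R]_m) (x : 'rV[R]_m).
Hypotheses (d_metric : metric_on X d) (xh_inj : injective xh).
Hypotheses (X_xh : forall j, X (xh j)) (X_x : X x).

Local Notation pt := 'rV[R]_m.
Local Notation nuh := (discrete_pmf w xh).

Lemma discrete_pmf_at j : nuh (xh j) = w j.
Proof. exact: sum_delta_inj. Qed.

Lemma supp_discrete_pmf : (forall j, 0 < w j) -> range xh `<=` supp nuh.
Proof. by move=> w_gt0 _ [j _ <-]; rewrite /supp /= discrete_pmf_at gt_eqF. Qed.

Lemma coupling_le_marginal (nu1 nu2 : pt -> R) lam x1 x2 :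
  coupling X nu1 nu2 lam -> X x1 -> X x2 -> lam (x1, x2) <= nu2 x2.
Proof.
move=> [lam_ge0 [_ [_ marg2]]] X1 X2; rewrite -lee_fin -(marg2 _ X2).
exact: le_term_esum (fun y _ => lam_ge0 (y, x2)) X1.
Qed.

Lemma coupling_mass_at nu lam :
  coupling X nu nuh lam -> nu x = \sum_(j < N) lam (x, xh j).
Proof.
move=> lamC; have [lam_ge0 [_ [marg1 _]]] := lamC.
apply/EFin_inj; rewrite -(marg1 _ X_x) -(@esum_point_masses _ _ X _ xh) //.
apply: eq_esum => y Xy.
have [[k <-] | y_out] := pselect (exists k, xh k = y); first by rewrite sum_delta_inj.
have y_out' j : xh j <> y by move=> xhj; apply: y_out; exists j.
rewrite sum_delta_out //; congr EFin; apply/le_anti; rewrite lam_ge0 andbT.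
by have := coupling_le_marginal lamC X_x Xy; rewrite /discrete_pmf sum_delta_out.
Qed.

Lemma coupling_cost_at nu lam : coupling X nu nuh lam ->
  ((\sum_(j < N) lam (x, xh j) * d x (xh j))%:E <= expect_cost X d lam)%E.
Proof.
move=> [lam_ge0 _].
have cost_ge0 (p : pt * pt) : (X `*` X) p -> 0 <= lam p * d p.1 p.2.
  by move=> [X1 X2]; rewrite mulr_ge0 //; apply: d_metric.1.
rewrite -(@esum_point_masses _ _ (X `*` X) _ (fun j => (x, xh j))); first last.
- by move=> j; rewrite mulr_ge0 //; apply: d_metric.1.
- by move=> j; exact: conj X_x (X_xh j).
apply: le_esum => -[y1 y2] Xy; rewrite lee_fin.
have [[k [<- <-]] | out] := pselect (exists k, (x, xh k) = (y1, y2)).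
  by rewrite sum_delta_inj // => i j [/xh_inj].
by rewrite sum_delta_out ?cost_ge0 // => j xj; apply: out; exists j.
Qed.

Lemma wball_mass_feasible eps eta nu : wball X d nuh eps nu -> 0 < eta ->
  exists2 s, knapsack_feasible w (fun j => d x (xh j)) (eps + eta) s &
    nu x = \sum_(j < N) s j.
Proof.
move=> [_ nu_wass] eta_gt0.
have : (wass X d nu nuh < (eps + eta)%:E)%E.
  by apply: le_lt_trans nu_wass _; rewrite lte_fin ltrDl.
case/ereal_inf_lt => _ [lam lamC <-] lam_cost.
exists (fun j => lam (x, xh j)); last exact: coupling_mass_at lamC.
split=> [j|]; first by rewrite lamC.1 -discrete_pmf_at (coupling_le_marginal lamC).
by rewrite -lee_fin; apply/ltW/(le_lt_trans (coupling_cost_at lamC) lam_cost).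
Qed.

Section ShiftToX.
Variable t : 'I_N -> R.
Hypothesis t_bounds : forall j, 0 <= t j <= w j.

Definition shift_pmf (y : pt) : R :=
  discrete_pmf (fun j => w j - t j) xh y + (\sum_(j < N) t j) * (x == y)%:R.

(* [w j - t j] stays at [xh j] and [t j] travels from [xh j] to [x]; the first
   coordinate is the point of [shift_pmf], the second one that of [nuh]. *)
Definition shift_plan (p : pt * pt) : R :=
  \sum_(j < N)
    ((w j - t j) * (xh j == p.1)%:R + t j * (x == p.1)%:R) * (xh j == p.2)%:R.

Let t_ge0 j : 0 <= t j. Proof. by case/andP: (t_bounds j). Qed.
Let wt_ge0 j : 0 <= w j - t j. Proof. by case/andP: (t_bounds j) => _; rewrite subr_ge0. Qed.
Let sum_t_ge0 : 0 <= \sum_(j < N) t j. Proof. exact: sumr_ge0. Qed.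

Lemma shift_pmf_ge : \sum_(j < N) t j <= shift_pmf x.
Proof.
rewrite /shift_pmf eqxx mulr1 lerDr.
by apply: sumr_ge0 => j _; rewrite mulr_ge0.
Qed.

Lemma supp_shift_pmf : supp shift_pmf `<=` range xh `|` [set x].
Proof.
move=> y; rewrite /supp /= /shift_pmf /discrete_pmf.
have [<- _|_] := eqVneq x y; first by right.
rewrite mulr0 addr0 => nz; left; apply: contrapT => y_out.
by move: nz; rewrite sum_delta_out ?eqxx // => j xhj; apply: y_out; exists j.
Qed.

Lemma shift_pmf_on : \sum_(j < N) w j = 1 -> pmf_on X shift_pmf.
Proof.
move=> w_sum1; split; [|split].
- by move=> y; rewrite addr_ge0 ?mulr_ge0 //; apply: sumr_ge0 => j _; rewrite mulr_ge0.
- move=> y Xy; rewrite /shift_pmf /discrete_pmf.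
  have [xy|_] := eqVneq x y; first by case: Xy; rewrite -xy.
  by rewrite mulr0 addr0 sum_delta_out // => j xhj; case: Xy; rewrite -xhj.
- under eq_esum do rewrite EFinD.
  rewrite esumD => [||y _]; last by rewrite lee_fin mulr_ge0.
    by rewrite esum_point_masses // esum_point_mass // -EFinD sumrB subrK w_sum1.
  by move=> y _; rewrite lee_fin; apply: sumr_ge0 => j _; rewrite mulr_ge0.
Qed.

Lemma shift_plan_coupling : coupling X shift_pmf nuh shift_plan.
Proof.
split; [|split; [|split]].
- by move=> p; apply: sumr_ge0 => j _; rewrite !mulr_ge0 ?addr_ge0 ?mulr_ge0.
- move=> [y1 y2] /= Y; apply: big1 => j _.
  have [xhj2|] := eqVneq (xh j) y2; last by rewrite mulr0.
  have X1 : ~ X y1 by move=> X1; apply: Y; split=> //=; rewrite -xhj2.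
  have [e|_] := eqVneq (xh j) y1; first by case: X1; rewrite -e.
  have [e|_] := eqVneq x y1; first by case: X1; rewrite -e.
  by rewrite !mulr0 addr0 mul0r.
- move=> y1 _; rewrite /shift_plan /= esum_point_masses // => [|j].
    by congr EFin; rewrite /shift_pmf /discrete_pmf big_split /= -mulr_suml.
  by rewrite addr_ge0 ?mulr_ge0.
- move=> y2 X2.
  transitivity (\esum_(y1 in X)
    ((\sum_(j < N) ((w j - t j) * (xh j == y2)%:R) * (xh j == y1)%:R)%:E +
     ((\sum_(j < N) t j * (xh j == y2)%:R) * (x == y1)%:R)%:E)).
    apply: eq_esum => y1 _; rewrite -EFinD; congr EFin.
    rewrite /shift_plan /= mulr_suml -big_split /=; apply: eq_bigr => j _; ring.
  rewrite esumD => [||y _]; first last.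
  - by rewrite lee_fin mulr_ge0 //; apply: sumr_ge0 => j _; rewrite mulr_ge0.
  - by move=> y _; rewrite lee_fin; apply: sumr_ge0 => j _; rewrite !mulr_ge0.
  rewrite esum_point_masses // => [|j]; last by rewrite mulr_ge0.
  rewrite esum_point_mass //; last by apply: sumr_ge0 => j _; rewrite mulr_ge0.
  rewrite -EFinD -big_split; congr EFin; apply: eq_bigr => j _ /=.
  by rewrite -mulrDl subrK.
Qed.

Lemma shift_plan_cost :
  expect_cost X d shift_plan = (\sum_(j < N) t j * d x (xh j))%:E.
Proof.
have dxx y : X y -> d y y = 0 by move=> Xy; apply/(d_metric.2.1 y y Xy Xy).
rewrite /expect_cost -(@esum_point_masses _ _ (X `*` X) _ (fun j => (x, xh j))).
- apply: eq_esum => -[y1 y2] [X1 X2]; congr EFin.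
  rewrite /shift_plan mulr_suml; apply: eq_bigr => j _ /=; rewrite xpair_eqE.
  have [<-|_] := eqVneq (xh j) y2; last by rewrite andbF !mulr0 mul0r.
  have [<-|_] := eqVneq x y1; rewrite ?mulr1 ?mulr0 ?addr0.
    by have [->|_] := eqVneq (xh j) x; rewrite ?dxx ?mulr0 ?mul0r ?add0r.
  by have [<-|_] := eqVneq (xh j) y1; rewrite ?dxx ?mulr0 ?mul0r.
- by move=> j; exact: conj X_x (X_xh j).
- by move=> j; rewrite mulr_ge0 //; apply: d_metric.1.
Qed.

Lemma shift_pmf_wball eps : \sum_(j < N) w j = 1 ->
  \sum_(j < N) t j * d x (xh j) <= eps -> wball X d nuh eps shift_pmf.
Proof.
move=> w_sum1 t_cost; split; first exact: shift_pmf_on.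
apply: le_trans (_ : expect_cost X d shift_plan <= _)%E.
  by apply: ereal_inf_lbound; exists shift_plan => //; exact: shift_plan_coupling.
by rewrite shift_plan_cost lee_fin.
Qed.

End ShiftToX.

End WorstCaseMass.

Theorem mainTheorem4 (R : realType) (m : nat) (X : set 'rV[R]_m)
  (d : 'rV[R]_m -> 'rV[R]_m -> R) (N : nat) (w : 'I_N -> R)
  (xh : 'I_N -> 'rV[R]_m) :
  countable X ->
  metric_on X d ->
  injective xh ->
  (forall j, X (xh j)) ->
  (forall j, 0 < w j) ->
  \sum_(j < N) w j = 1 ->
  forall (eps : R) (x : 'rV[R]_m), 0 <= eps -> X x ->
  exists nustar : 'rV[R]_m -> R,
    wball X d (discrete_pmf w xh) eps nustar /\
    sup [set nu x | nu in wball X d (discrete_pmf w xh) eps] = nustar x /\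
    (exists s : seq 'rV[R]_m, (size s <= N.+1)%N /\ supp nustar `<=` [set` s]) /\
    supp nustar `<=` supp (discrete_pmf w xh) `|` [set x].
Proof.
move=> _ d_metric xh_inj X_xh w_gt0 w_sum1 eps x eps_ge0 X_x.
have w_ge0 j : 0 <= w j := ltW (w_gt0 j).
have c_ge0 j : 0 <= d x (xh j) by apply: d_metric.1.
have [t [t_bounds t_cost] [lam lam_ge0 t_opt]] := fractional_knapsack w_ge0 c_ge0 eps_ge0.
pose nus := shift_pmf w xh x t.
have mass_le nu : wball X d (discrete_pmf w xh) eps nu -> nu x <= nus x.
  move=> nu_ball; apply/ler_addgt0Pr => del del_gt0.
  have lam1_gt0 : 0 < lam + 1 by rewrite ltr_wpDl.
  have eta_gt0 : 0 < del / (lam + 1) by rewrite divr_gt0.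
  have [s s_feas ->] := wball_mass_feasible d_metric xh_inj X_xh X_x nu_ball eta_gt0.
  apply: le_trans (t_opt _ _ s_feas) _; apply: lerD; first exact: shift_pmf_ge.
  by rewrite mulrA ler_pdivrMr // mulrDr mulr1 mulrC lerDl ltW.
have supp_nus : supp nus `<=` range xh `|` [set x] by apply: supp_shift_pmf.
have nus_ball : wball X d (discrete_pmf w xh) eps nus by exact: shift_pmf_wball.
exists nus; split=> //; split.
  by apply: sup_max => [|_ [nu /mass_le nu_le <-]]; first exists nus.
split.
  exists (x :: map xh (enum 'I_N)); split; first by rewrite /= size_map size_enum_ord.
  by move=> y /supp_nus [[j _ <-] | ->]; rewrite /= ?mem_head // in_cons map_f ?orbT ?mem_enum.
by move=> y /supp_nus [/(supp_discrete_pmf xh_inj w_gt0) | ->]; [left | right].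
Qed.
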